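(* Let $m\geq 3$ and $n\in \mathbb{N}$. Then \[ \sigma'_m(n) = -n\, e_{m+2,n}+\sum_{k=1}^{n-1} (-1)^{k+1} \big( \sigma'_m(n-P_{m+2,k})+\sigma'_m(n- Q_{m+2,k}) \big), \] where $P_{m+2,k}=\frac{k(mk-(m-2))}{2}$ and $Q_{m+2,k}=\frac{k(mk+(m-2))}{2}$.
   Context: For $m\ge3$ and $n\in\mathbb{N}$, $\sigma'_m(n)$ is the sum of the positive divisors $d$ of $n$ with $d\equiv 0$, $1$ or $m-1 \pmod m$; set $\sigma'_m(x)=0$ for integers $x\le 0$. For $g\ge5$ and $n\in\mathbb{N}_0$, $e_{g,n}=1$ if $n=0$, $e_{g,n}=(-1)^k$ if $n=P_{g,k}$ or $n=Q_{g,k}$ for some $k\in\mathbb{N}$ (where $P_{g,k}=\frac{k((g-2)k-(g-4))}{2}$, $Q_{g,k}=\frac{k((g-2)k+(g-4))}{2}$), and $e_{g,n}=0$ otherwise. *)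

From mathcomp Require Import all_boot all_algebra.
Set Implicit Arguments. Unset Strict Implicit. Unset Printing Implicit Defensive.
Import GRing.Theory Num.Theory.
Local Open Scope ring_scope.

Definition sigmap_nat (m n : nat) : nat :=
  \sum_(d <- divisors n | [|| d %% m == 0, d %% m == 1 | d %% m == m.-1]%N) d.

Definition sigmap (m : nat) (x : int) : int :=
  if (0 < x)%R then (sigmap_nat m `|x|%N)%:Z else 0.

(* Generalized pentagonal numbers (as natural numbers; for g >= 5 and
   k >= 1 the quantities are nonnegative integers). *)
Definition Pgk (g k : nat) : nat := (k * ((g - 2) * k - (g - 4)) %/ 2)%N.
Definition Qgk (g k : nat) : nat := (k * ((g - 2) * k + (g - 4)) %/ 2)%N.

(* e_{g,n}: 1 if n = 0, (-1)^k if n = P_{g,k} or Q_{g,k} for some k >= 1,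
   0 otherwise.  Since P_{g,k}, Q_{g,k} >= k for g >= 5, it suffices to
   search k in 1..n. *)
Definition eg (g n : nat) : int :=
  if n == 0%N then 1 else
  if [pick k : 'I_n.+1 | (0 < k)%N && ((Pgk g k == n) || (Qgk g k == n))]
     is Some k then (-1) ^+ k else 0.

(* Let F be the infinite product of (1 - q^(m t)), (1 - q^(m t + 1)) and
   (1 - q^(m t + m - 1)) over t >= 0 (t > 0 for the first factor).  Jacobi's
   triple product identity gives F = sum_(k in Z) (-1)^k q^(k (m k + m - 2) / 2)
   = sum_n e_(m+2,n) q^n, while logarithmic differentiation gives
   q F' / F = - sum_(n >= 1) sigma'_m(n) q^n, that is
   n e_(m+2,n) = - sum_(j < n) e_(m+2,j) sigma'_m(n - j); grouping the nonzero
   e_(m+2,j) by generalized pentagonal numbers gives the formula.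
   All series are polynomials compared modulo X^(n+1): F is cut to N > 2n
   factors of each kind, and the finite triple product is the q-binomial
   theorem at q = X^m, combined with [2N, r]_q (q; q)_N = 1 mod X^(n+1) for
   every r contributing below degree n + 1. *)

From mathcomp Require Import all_boot all_algebra.
From mathcomp Require Import order zify ring.
Import Order.TTheory GRing.Theory Num.Theory.
Set Implicit Arguments. Unset Strict Implicit. Unset Printing Implicit Defensive.
Local Open Scope ring_scope.

Section GaussianBinomial.
Variables (R : comNzRingType) (q : R).

Fixpoint qbinom (n k : nat) : R :=
  match n, k with
  | 0%N, 0%N => 1
  | 0%N, _.+1 => 0
  | _.+1, 0%N => 1
  | n.+1, k.+1 => qbinom n k + q ^+ k.+1 * qbinom n k.+1
  end.

Definition qpoch (n : nat) : R := \prod_(t < n) (1 - q ^+ t.+1).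

Lemma qbinom_gt n k : (n < k)%N -> qbinom n k = 0.
Proof. by elim: n k => [|n IHn] [|k] //= ltnk; rewrite !IHn ?mulr0 ?addr0 // ltnW. Qed.

Lemma qbinom_n0 n : qbinom n 0 = 1.
Proof. by case: n. Qed.

Lemma qbinom_nn n : qbinom n n = 1.
Proof. by elim: n => //= n ->; rewrite qbinom_gt ?mulr0 ?addr0. Qed.

Lemma qpochS n : qpoch n.+1 = qpoch n * (1 - q ^+ n.+1).
Proof. by rewrite /qpoch big_ord_recr. Qed.

Lemma q_binomial n (y z : R) :
  \prod_(t < n) (z + y * q ^+ t) =
  \sum_(r < n.+1) qbinom n r * q ^+ 'C(r, 2) * y ^+ r * z ^+ (n - r).
Proof.
elim: n y z => [|n IHn] y z; first by rewrite big_ord0 big_ord1 !expr0 !mulr1.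
rewrite big_ord_recl expr0 mulr1.
under eq_bigr do rewrite /bump /= exprS mulrA.
rewrite IHn mulrDl !big_distrr /= [RHS]big_ord_recl /= expr0 !mulr1 subn0.
under [X in _ = _ + X]eq_bigr do rewrite /bump /= add1n !mulrDl.
rewrite big_split /= [X in _ = _ + X]addrC addrA; congr (_ + _).
- rewrite big_ord_recl /= expr0 !mulr1 subn0 qbinom_n0 mul1r -exprS mul1r.
  rewrite big_ord_recr /= qbinom_gt // mulr0 !mul0r addr0.
  congr (_ + _); apply: eq_bigr => i _; rewrite /bump /= !add1n add0n subSS.
  have -> : (n - i = (n - i.+1).+1)%N by have := ltn_ord i; lia.
  rewrite binS bin1 !exprD !exprS exprMn; ring.
- apply: eq_bigr => i _; rewrite add0n subSS binS bin1 !exprD !exprS exprMn; ring.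
Qed.

Lemma qbinom_qpoch n k : (k <= n)%N -> qbinom n k * qpoch k * qpoch (n - k) = qpoch n.
Proof.
elim: n k => [|n IHn] [|k] //= lekn.
- by rewrite /qpoch !big_ord0 !mulr1.
- by rewrite /qpoch big_ord0 subn0 !mul1r.
rewrite subSS qpochS [qpoch n.+1]qpochS.
have [ltkn | lenk] := ltnP k n; last first.
  have -> : k = n by lia.
  by rewrite qbinom_nn qbinom_gt // subnn /qpoch big_ord0; ring.
have qn : q ^+ n.+1 = q ^+ k.+1 * q ^+ (n - k) by rewrite -exprD; congr (_ ^+ _); lia.
have -> : qpoch n * (1 - q ^+ n.+1) =
    qpoch n * (1 - q ^+ k.+1) + q ^+ k.+1 * qpoch n * (1 - q ^+ (n - k)).
  by rewrite qn; ring.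
rewrite -{1}(IHn k) // -(IHn k.+1) // qpochS.
have -> : (n - k = (n - k.+1).+1)%N by lia.
rewrite qpochS; ring.
Qed.

End GaussianBinomial.

Section TruncatedEquality.
Variables (R : nzRingType) (T : nat).
Implicit Types p q r u : {poly R}.

Definition eq_upto p q := forall i, (i <= T)%N -> p`_i = q`_i.

Lemma eq_upto_sym p q : eq_upto p q -> eq_upto q p.
Proof. by move=> epq i leiT; rewrite epq. Qed.

Lemma eq_upto_trans q p r : eq_upto p q -> eq_upto q r -> eq_upto p r.
Proof. by move=> epq eqr i leiT; rewrite epq ?eqr. Qed.

Lemma eq_uptoD p q p' q' : eq_upto p q -> eq_upto p' q' -> eq_upto (p + p') (q + q').
Proof. by move=> epq epq' i leiT; rewrite !coefD epq ?epq'. Qed.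

Lemma eq_uptoN p q : eq_upto p q -> eq_upto (- p) (- q).
Proof. by move=> epq i leiT; rewrite !coefN epq. Qed.

Lemma eq_uptoMl r p q : eq_upto p q -> eq_upto (r * p) (r * q).
Proof.
move=> epq i leiT; rewrite !coefM; apply: eq_bigr => j _.
by rewrite epq // (leq_trans (leq_subr _ _)).
Qed.

Lemma eq_uptoMr r p q : eq_upto p q -> eq_upto (p * r) (q * r).
Proof.
move=> epq i leiT; rewrite !coefMr; apply: eq_bigr => j _.
by rewrite epq // (leq_trans (leq_subr _ _)).
Qed.

Lemma eq_upto_sum (I : Type) (s : seq I) (P : pred I) (F G : I -> {poly R}) :
  (forall i, P i -> eq_upto (F i) (G i)) ->
  eq_upto (\sum_(i <- s | P i) F i) (\sum_(i <- s | P i) G i).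
Proof. by move=> eFG j lejT; rewrite !coef_sum; apply: eq_bigr => i /eFG->. Qed.

Lemma eq_upto_mulXn0 p e : (T < e)%N -> eq_upto (p * 'X^e) 0.
Proof. by move=> ltTe i leiT; rewrite coefMXn coef0 (leq_ltn_trans leiT ltTe). Qed.

Lemma eq_upto_1subXn e : (T < e)%N -> eq_upto (1 - 'X^e) 1.
Proof.
move=> ltTe i leiT; rewrite coefB coefXn.
by rewrite (ltn_eqF (leq_ltn_trans leiT ltTe)) subr0.
Qed.

Lemma eq_upto_cancel p u : u`_0 = 1 -> eq_upto (p * u) 0 -> eq_upto p 0.
Proof.
move=> u0 epu; elim/ltn_ind=> i IHi leiT.
have := epu i leiT; rewrite coef0 coefM big_ord_recr /= subnn u0 mulr1 big1 ?add0r // => j _.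
by rewrite IHi ?coef0 ?mul0r // ltnW // (leq_trans _ leiT).
Qed.

End TruncatedEquality.

Section LogDerivative.
Variable R : comNzRingType.

Definition prod_1subXn (L : seq nat) : {poly R} := \prod_(a <- L) (1 - 'X^a).

Definition sum_dvd (L : seq nat) (i : nat) : nat := \sum_(a <- L | (a %| i)%N) a.

(* The truncation of - X P' / P for P = prod_1subXn L. *)
Definition dvd_series (T : nat) (L : seq nat) : {poly R} :=
  \poly_(i < T.+1) (if i is 0 then 0 else (sum_dvd L i)%:R).

Lemma dvd_series_cons T a L : dvd_series T (a :: L) = dvd_series T [:: a] + dvd_series T L.
Proof.
apply/polyP => i; rewrite coefD !coef_poly.
case: ltnP => _; last by rewrite addr0.
case: i => [|i]; first by rewrite addr0.
by rewrite -natrD /sum_dvd !big_cons big_nil; case: ifP; rewrite ?addn0.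
Qed.

Lemma eq_upto_dvd_series1 T a : (0 < a)%N ->
  eq_upto T ((1 - 'X^a) * dvd_series T [:: a]) ('X^a *+ a).
Proof.
move=> a_gt0 i leiT.
have sum_dvd1 j : sum_dvd [:: a] j = if (a %| j)%N then a else 0%N.
  by rewrite /sum_dvd big_cons big_nil; case: ifP; rewrite ?addn0.
rewrite mulrBl mul1r coefB coefXnM coefMn coefXn !coef_poly !sum_dvd1 ltnS leiT.
have [ltia | leai] := ltnP i a.
  rewrite (ltn_eqF ltia) mul0rn subr0; case: i ltia leiT => // i ltia _.
  by rewrite gtnNdvd.
rewrite (leq_ltn_trans (leq_subr a i)) // -(subnK leai) addnK.
case: (i - a)%N => [|j].
  by rewrite add0n eqxx subr0; case: a a_gt0 {leai sum_dvd1} => // a _; rewrite dvdnn.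
rewrite addSn /= -addSn (dvdn_addl _ (dvdnn a)) subrr gtn_eqF ?mul0rn //.
by rewrite addSn ltnS leq_addl.
Qed.

Lemma logderiv_prod_1subXn T L : 0%N \notin L ->
  eq_upto T ('X * (prod_1subXn L)^`()) (- (prod_1subXn L * dvd_series T L)).
Proof.
elim: L => [_ i _|a L IHL].
  rewrite /prod_1subXn big_nil derivC mulr0 mul1r coef0 coefN coef_poly.
  by case: ifP => // _; case: i => [|i]; rewrite /sum_dvd ?big_nil oppr0.
rewrite in_cons negb_or => /andP[a_neq0 /IHL{}IHL].
have a_gt0 : (0 < a)%N by rewrite lt0n eq_sym.
rewrite /prod_1subXn big_cons -/(prod_1subXn L) dvd_series_cons.
set P := prod_1subXn L; set S := dvd_series T L.
have -> : 'X * ((1 - 'X^a) * P)^`() = - ('X^a *+ a) * P + (1 - 'X^a) * ('X * P^`()).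
  have Xa : 'X^a = 'X * 'X^(a.-1) :> {poly R} by rewrite -exprS prednK.
  by rewrite derivM derivB derivC derivXn sub0r Xa; ring.
have -> : - ((1 - 'X^a) * P * (dvd_series T [:: a] + S)) =
    - ((1 - 'X^a) * dvd_series T [:: a]) * P + (1 - 'X^a) * - (P * S) by ring.
apply: eq_uptoD; last exact: eq_uptoMl.
by apply/eq_uptoMr/eq_uptoN/eq_upto_sym/eq_upto_dvd_series1.
Qed.

Lemma coef_prod_1subXn_rec L j : 0%N \notin L ->
  (prod_1subXn L)`_j *+ j = - \sum_(i < j) (prod_1subXn L)`_i *+ sum_dvd L (j - i).
Proof.
move=> L_no0; have := logderiv_prod_1subXn (T := j) L_no0 (leqnn j).
rewrite coefXM coef_deriv coefN coefM big_ord_recr /= subnn.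
rewrite [(dvd_series _ _)`_0]coef_poly mulr0 addr0.
case: j => [|j]; first by rewrite !big_ord0 mulr0n oppr0.
move=> /= ->; congr (- _); apply: eq_bigr => i _.
by rewrite coef_poly ltnS leq_subr subSn ?mulr_natr // -ltnS.
Qed.

End LogDerivative.

Lemma signr_modn2 (R : nzRingType) a b : a = b %[mod 2] -> (-1) ^+ a = (-1) ^+ b :> R.
Proof. by move=> eab; rewrite -signr_odd -modn2 eab modn2 signr_odd. Qed.

Lemma bin2_double k : ('C(k, 2).*2 + k = k * k)%N.
Proof. by elim: k => // k IHk; rewrite binS bin1; lia. Qed.

Lemma bin2D a b : ('C(a + b, 2) = 'C(a, 2) + a * b + 'C(b, 2))%N.
Proof.
elim: b => [|b IHb]; first by rewrite muln0 bin0n !addn0.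
by rewrite addnS !binS !bin1 IHb mulnS; lia.
Qed.

Lemma sum_ord_center (V : nmodType) n (F : nat -> V) :
  \sum_(r < (n + n).+1) F r = F n + \sum_(k < n) (F (n - k.+1)%N + F (n + k.+1)%N).
Proof.
rewrite -(big_mkord xpredT) (@big_cat_nat _ _ _ n) //=; last lia.
rewrite big_nat_recl ?leq_addr // big_split /= addrCA; congr (_ + _).
rewrite big_nat_rev /= add0n big_mkord; congr (_ + _).
rewrite -{1}(add0n n) big_addn addnK big_mkord; apply: eq_bigr => k _.
by rewrite addnS addnC.
Qed.

Section PentagonalExponents.
Variable m : nat.
Hypothesis m_ge2 : (2 <= m)%N.

Lemma Pgk_binom k : Pgk (m + 2) k = (m * 'C(k, 2) + k)%N.
Proof.
rewrite /Pgk (_ : m + 2 - 2 = m)%N 1?(_ : m + 2 - 4 = m - 2)%N; try lia.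
have := bin2_double k; case: k => [|k] kk; first by rewrite muln0.
by rewrite (_ : k.+1 * _ = (m * 'C(k.+1, 2) + k.+1) * 2)%N ?mulnK //; nia.
Qed.

Lemma Qgk_binom k : Qgk (m + 2) k = (m * 'C(k, 2) + m.-1 * k)%N.
Proof.
rewrite /Qgk (_ : m + 2 - 2 = m)%N 1?(_ : m + 2 - 4 = m - 2)%N; try lia.
have := bin2_double k => kk.
by rewrite (_ : k * _ = (m * 'C(k, 2) + m.-1 * k) * 2)%N ?mulnK //; nia.
Qed.

(* The generalized (m+2)-gonal number k (m k + m - 2) / 2 of signed index k = r - N. *)
Definition theta_exp (N r : nat) : nat :=
  if (N <= r)%N then Qgk (m + 2) (r - N) else Pgk (m + 2) (N - r).

Lemma theta_exp_below N k : (k <= N)%N -> theta_exp N (N - k) = Pgk (m + 2) k.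
Proof.
rewrite /theta_exp; case: k => [|k] lekN; first by rewrite subn0 leqnn subnn /Pgk /Qgk !mul0n.
by rewrite leqNgt (_ : N - k.+1 < N)%N ?subKn //; lia.
Qed.

Lemma theta_exp_above N k : theta_exp N (N + k) = Qgk (m + 2) k.
Proof. by rewrite /theta_exp leq_addr addKn. Qed.

Lemma theta_exp_center N : theta_exp N N = 0%N.
Proof. by rewrite /theta_exp leqnn subnn /Qgk mul0n. Qed.

Lemma theta_exp_ge_dist N r : (N - r + (r - N) <= theta_exp N r)%N.
Proof.
rewrite /theta_exp; case: (leqP N r) => leNr; rewrite ?Qgk_binom ?Pgk_binom; last nia.
have : (r - N <= m.-1 * (r - N))%N by rewrite leq_pmull //; lia.
lia.
Qed.

Lemma theta_exp_double N r :
  (theta_exp N r).*2%:Z = m%:Z * (r%:Z - N%:Z) ^+ 2 + (m%:Z - 2) * (r%:Z - N%:Z).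
Proof.
rewrite /theta_exp; case: (leqP N r) => leNr; rewrite ?Qgk_binom ?Pgk_binom.
  by have := bin2_double (r - N); nia.
by have := bin2_double (N - r); nia.
Qed.

(* The exponent of the r-th term of q_binomial at q = X^m, z = X^(m M + 1), n = M.+1 + M.+1. *)
Lemma theta_exp_shift M r : (r <= M.+1 + M.+1)%N ->
  (m * 'C(r, 2) + (m * M + 1) * (M.+1 + M.+1 - r) =
   m * 'C(M.+1, 2) + M.+1 * (m * M + 1) + theta_exp M.+1 r)%N.
Proof.
move=> le_r; rewrite /theta_exp; case: (leqP M.+1 r) => leNr.
  have [k rk] : exists k, r = (M.+1 + k)%N by exists (r - M.+1)%N; lia.
  subst r; rewrite Qgk_binom addKn bin2D.
  have [j Nj] : exists j, M.+1 = (k + j)%N by exists (M.+1 - k)%N; lia.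
  rewrite (_ : M.+1 + M.+1 - (M.+1 + k) = j)%N; [nia | lia].
have [k Nk] : exists k, M.+1 = (r + k)%N by exists (M.+1 - r)%N; lia.
rewrite Pgk_binom Nk addKn (_ : r + k + (r + k) - r = r + k + k)%N ?bin2D; last lia.
have := bin2_double k; nia.
Qed.

End PentagonalExponents.

Section GeneralizedPentagonal.
Variable m : nat.
Hypothesis m_ge3 : (3 <= m)%N.
Let m_ge2 : (2 <= m)%N := ltnW m_ge3.

Lemma theta_exp_inj N : injective (theta_exp m N).
Proof.
move=> r1 r2 E12; have := theta_exp_double m_ge2 N r1; rewrite E12 theta_exp_double //.
set d1 := r1%:Z - N%:Z; set d2 := r2%:Z - N%:Z => E.
have : (d1 - d2) * (m%:Z * (d1 + d2 + 1) - 2) = 0.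
  rewrite -[RHS](subrr (m%:Z * d2 ^+ 2 + (m%:Z - 2) * d2)) {1}E; ring.
move/eqP; rewrite mulf_eq0 subr_eq0 => /orP[/eqP|/eqP]; first by rewrite /d1 /d2; lia.
(* m * (d1 + d2 + 1) = 2 has no solution for m >= 3; for m = 2, P_k = Q_k = k^2. *)
by have [] : (d1 + d2 + 1 <= 0) \/ (1 <= d1 + d2 + 1); [lia | nia | nia].
Qed.

Lemma eg_theta N j : (j <= N)%N ->
  eg (m + 2) j = \sum_(r < (N + N).+1 | theta_exp m N r == j) (-1) ^+ (r + N).
Proof.
move=> lejN.
have theta_at (r0 : 'I_(N + N).+1) : theta_exp m N r0 = j ->
    \sum_(r < (N + N).+1 | theta_exp m N r == j) (-1) ^+ (r + N) = (-1) ^+ (r0 + N) :> int.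
  by move=> Er0; rewrite (big_pred1 r0) // => r; rewrite /= -Er0 (inj_eq (@theta_exp_inj N)).
have [j0 | j_neq0] := eqVneq j 0%N.
  have ltN : (N < (N + N).+1)%N by lia.
  subst j; rewrite /eg eqxx (theta_at (Ordinal ltN)) ?theta_exp_center //.
  by rewrite -signr_odd addnn odd_double.
rewrite /eg (negPf j_neq0); case: pickP => [k /andP[k_gt0 /orP[/eqP Pk | /eqP Qk]] | no_k].
- have ltr : (N - k < (N + N).+1)%N by lia.
  rewrite (theta_at (Ordinal ltr)) /= ?theta_exp_below //; last by have := ltn_ord k; lia.
  by apply: signr_modn2; have := ltn_ord k; lia.
- have ltr : (N + k < (N + N).+1)%N by have := ltn_ord k; lia.
  rewrite (theta_at (Ordinal ltr)) /= ?theta_exp_above //.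
  by apply: signr_modn2; lia.
rewrite big_pred0 // => r; apply/negbTE/eqP => Er.
have := theta_exp_ge_dist m_ge2 N r; rewrite Er => le_dist.
rewrite /theta_exp in Er; case: (leqP N r) => leNr in Er.
  have k_gt0 : (0 < r - N)%N.
    by rewrite lt0n; apply: contra_neq j_neq0 => rN; rewrite -Er rN.
  by have := no_k (@Ordinal j.+1 (r - N) ltac:(lia)); rewrite /= k_gt0 Er eqxx orbT.
have := no_k (@Ordinal j.+1 (N - r) ltac:(lia)); rewrite /= Er eqxx.
by rewrite subn_gt0 leNr.
Qed.

Lemma sum_eg n (f : nat -> int) : (forall j, (n <= j)%N -> f j = 0) ->
  \sum_(j < n) eg (m + 2) j * f j =
  f 0%N + \sum_(1 <= k < n) (-1) ^+ k * (f (Pgk (m + 2) k) + f (Qgk (m + 2) k)).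
Proof.
case: n => [|n] f_vanish; first by rewrite big_ord0 big_geq // f_vanish ?addr0.
set G := fun k => (-1) ^+ k * (f (Pgk (m + 2) k) + f (Qgk (m + 2) k)).
have theta_sum : \sum_(j < n.+1) eg (m + 2) j * f j =
    \sum_(r < (n.+1 + n.+1).+1) (-1) ^+ (r + n.+1) * f (theta_exp m n.+1 r).
  under eq_bigr => j _ do rewrite (eg_theta (ltnW (ltn_ord j))) big_distrl.
  rewrite (exchange_big_dep xpredT) //=; apply: eq_bigr => r _.
  have [ltEn | leEn] := ltnP (theta_exp m n.+1 r) n.+1.
    by rewrite (big_pred1 (Ordinal ltEn)) // => j; rewrite eq_sym.
  rewrite f_vanish // mulr0 big_pred0 // => j /=.
  by rewrite gtn_eqF // (leq_trans (ltn_ord j) leEn).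
rewrite theta_sum (sum_ord_center n.+1 (fun r => (-1) ^+ (r + n.+1) * f (theta_exp m n.+1 r))) /=.
rewrite theta_exp_center -signr_odd addnn odd_double expr0 mul1r; congr (_ + _).
transitivity (\sum_(k < n.+1) G k.+1).
  apply: eq_bigr => k _; have ltkn := ltn_ord k.
  rewrite theta_exp_below // theta_exp_above /G mulrDr.
  by congr (_ * _ + _ * _); apply: signr_modn2; lia.
rewrite -(big_mkord xpredT (fun k => G k.+1)) -(big_add1 _ _ 0 n.+2 xpredT G).
by rewrite big_nat_recr //= /G !f_vanish ?mulr0 ?addr0 // ?Pgk_binom ?Qgk_binom; nia.
Qed.

End GeneralizedPentagonal.

Section QPochhammerTruncation.
Variables (R : comNzRingType) (m : nat).
Hypothesis m_gt0 : (0 < m)%N.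

Local Notation qpochX := (qpoch ('X^m : {poly R})).

Lemma coef0_qpochX n : (qpochX n)`_0 = 1.
Proof.
elim: n => [|n IHn]; first by rewrite /qpoch big_ord0 coefC.
rewrite qpochS coef0M IHn -exprM coefB coefC coefXn eqxx.
by rewrite ltn_eqF ?muln_gt0 ?m_gt0 ?subr0 ?mul1r.
Qed.

Lemma qpochX_upto T n : (T <= n)%N -> eq_upto T (qpochX n) (qpochX T).
Proof.
move=> /subnKC <-; elim: (n - T)%N => [|d IHd]; first by rewrite addn0.
rewrite addnS qpochS; apply: (@eq_upto_trans _ _ (qpochX (T + d) * 1)); last by rewrite mulr1.
by apply: eq_uptoMl; rewrite -exprM; apply: eq_upto_1subXn; nia.
Qed.

Lemma qbinom_qpochX_upto T n r N : (T < r)%N -> (T < n - r)%N -> (T <= N)%N ->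
  eq_upto T (qbinom 'X^m n r * qpochX N) 1.
Proof.
move=> ltTr ltTnr leTN; set P := qpochX T; set G := qbinom _ n r.
have GPP : eq_upto T (G * P * P) P.
  apply: (@eq_upto_trans _ _ (G * qpochX r * qpochX (n - r))).
    apply: (@eq_upto_trans _ _ (G * qpochX r * P)).
      exact/eq_uptoMr/eq_uptoMl/eq_upto_sym/qpochX_upto/ltnW.
    exact/eq_uptoMl/eq_upto_sym/qpochX_upto/ltnW.
  rewrite qbinom_qpoch; last lia.
  apply: qpochX_upto; lia.
have GP1 : eq_upto T (G * P) 1.
  suff GP0 : eq_upto T (G * P - 1) 0.
    by move=> i leiT; apply/eqP; rewrite -subr_eq0 -coefB GP0 ?coef0.
  apply: eq_upto_cancel (coef0_qpochX T) _ => i leiT.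
  by rewrite mulrBl mul1r coefB GPP // subrr coef0.
exact/(eq_upto_trans _ GP1)/eq_uptoMl/qpochX_upto.
Qed.

End QPochhammerTruncation.

Section JacobiTripleProduct.
Variables (R : comNzRingType) (m : nat).
Hypothesis m_ge2 : (2 <= m)%N.

Definition jacobi_prod N : {poly R} :=
  \prod_(t < N) ((1 - 'X^(m * t + 1)) * (1 - 'X^(m * t + m.-1))).

Definition theta_poly N : {poly R} :=
  \sum_(r < (N + N).+1) (-1) ^+ (r + N) * 'X^(theta_exp m N r).

Lemma prod_qbinomial_jacobi M :
  \prod_(t < M.+1 + M.+1) ('X^(m * M + 1) + (-1) * ('X^m) ^+ t) =
  (-1) ^+ M.+1 * 'X^(m * 'C(M.+1, 2) + M.+1 * (m * M + 1)) * jacobi_prod M.+1.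
Proof.
rewrite big_split_ord /=.
have low (t : 'I_M.+1) : 'X^(m * M + 1) + (-1) * ('X^m) ^+ t =
    -1 * 'X^(m * t) * (1 - 'X^(m * (M - t) + 1)) :> {poly R}.
  rewrite -exprM (_ : m * M + 1 = m * t + (m * (M - t) + 1))%N; first by rewrite exprD; ring.
  by have := ltn_ord t; rewrite ltnS => letM; rewrite addnA -mulnDr subnKC.
have high (t : 'I_M.+1) : 'X^(m * M + 1) + (-1) * ('X^m) ^+ (M.+1 + t) =
    'X^(m * M + 1) * (1 - 'X^(m * t + m.-1)) :> {poly R}.
  rewrite -exprM (_ : m * (M.+1 + t) = m * M + 1 + (m * t + m.-1))%N.
    by rewrite (exprD _ (m * M + 1)); ring.
  by rewrite mulnDr mulnS; lia.
rewrite (eq_bigr _ (fun t _ => low t)) (eq_bigr _ (fun t _ => high t)) !big_split /=.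
rewrite !prodr_const card_ord prodrXr -exprM exprD -(big_mkord xpredT) -big_distrr bin2_sum.
have -> : \prod_(t < M.+1) (1 - 'X^(m * (M - t) + 1)) =
          \prod_(t < M.+1) (1 - 'X^(m * t + 1)) :> {poly R}.
  rewrite -(big_mkord xpredT (fun t => 1 - 'X^(m * t + 1))) big_rev_mkord subn0.
  by apply: eq_bigr => t _; rewrite subSS.
rewrite /jacobi_prod big_split /= [(_ * (m * M + 1))%N]mulnC; ring.
Qed.

Lemma jacobi_prod_qbinom M :
  jacobi_prod M.+1 = \sum_(r < (M.+1 + M.+1).+1)
    (-1) ^+ (r + M.+1) * qbinom 'X^m (M.+1 + M.+1) r * 'X^(theta_exp m M.+1 r).
Proof.
set N := M.+1; set c := (m * 'C(N, 2) + N * (m * M + 1))%N.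
have := q_binomial ('X^m : {poly R}) (N + N) (-1) 'X^(m * M + 1).
rewrite prod_qbinomial_jacobi => qbin.
apply: (monic_lreg (monicXn R c)).
have sign2 : (-1) ^+ N * (-1) ^+ N = 1 :> {poly R}.
  by rewrite -exprD -signr_odd addnn odd_double.
transitivity ((-1) ^+ N * ((-1) ^+ N * 'X^c * jacobi_prod N)); first by rewrite !mulrA sign2 mul1r.
rewrite qbin !mulr_sumr; apply: eq_bigr => r _.
have shiftX : 'X^(m * 'C(r, 2)) * 'X^((m * M + 1) * (N + N - r)) =
              'X^c * 'X^(theta_exp m N r) :> {poly R}.
  by rewrite -!exprD theta_exp_shift // -ltnS.
rewrite -!exprM; transitivity ((-1) ^+ (r + N) * qbinom ('X^m : {poly R}) (N + N) r *
    ('X^(m * 'C(r, 2)) * 'X^((m * M + 1) * (N + N - r)))); first by rewrite exprD; ring.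
by rewrite shiftX; ring.
Qed.

Lemma jacobi_triple_product_upto T N : (T.*2 < N)%N ->
  eq_upto T (qpoch 'X^m N * jacobi_prod N) (theta_poly N).
Proof.
case: N => [//|M] ltTN; rewrite jacobi_prod_qbinom mulr_sumr; apply: eq_upto_sum => r _.
set s := (-1) ^+ _; set G := qbinom _ _ _; set e := theta_exp m M.+1 r.
rewrite (_ : _ * (s * G * 'X^e) = s * (G * qpoch 'X^m M.+1) * 'X^e); last by ring.
have [leeT | ltTe] := leqP e T; last first.
  by apply: (@eq_upto_trans _ _ 0); [|apply: eq_upto_sym]; apply: eq_upto_mulXn0.
apply: (@eq_upto_trans _ _ (s * 1 * 'X^e)); last by rewrite mulr1.
apply/eq_uptoMr/eq_uptoMl.
have := theta_exp_ge_dist m_ge2 M.+1 r; rewrite -/e => dist.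
apply: qbinom_qpochX_upto; lia.
Qed.

Lemma coef_theta_poly N j :
  (theta_poly N)`_j = \sum_(r < (N + N).+1 | theta_exp m N r == j) (-1) ^+ (r + N).
Proof.
rewrite coef_sum [RHS]big_mkcond; apply: eq_bigr => r _.
by rewrite -(rmorph_sign (@polyC R)) coefCM coefXn eq_sym; case: eqP; rewrite ?mulr1 ?mulr0.
Qed.

End JacobiTripleProduct.

(* For r < m, the first N positive integers congruent to r modulo m. *)
Definition progression (m r N : nat) : seq nat :=
  [seq (m * t + r)%N | t <- iota (r == 0%N) N].

Definition jacobi_exps (m N : nat) : seq nat :=
  progression m 0 N ++ progression m 1 N ++ progression m m.-1 N.

Lemma jacobi_exps_no0 m N : (2 <= m)%N -> 0%N \notin jacobi_exps m N.
Proof.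
move=> m_ge2; rewrite !mem_cat !negb_or; apply/and3P.
by split; apply/mapP => -[t]; rewrite mem_iota; case: eqP => /=; lia.
Qed.

Lemma prod_jacobi_exps (R : comNzRingType) m N : (2 <= m)%N ->
  prod_1subXn R (jacobi_exps m N) = qpoch 'X^m N * jacobi_prod R m N.
Proof.
move=> m_ge2; rewrite /prod_1subXn /jacobi_exps !big_cat !big_map /= /jacobi_prod big_split /=.
rewrite (_ : (m.-1 == 0)%N = false) /=; last lia.
have iota1 : iota 1 N = index_iota 1 N.+1 by rewrite /index_iota subn1.
have iota0 : iota 0 N = index_iota 0 N by rewrite /index_iota subn0.
rewrite iota1 iota0 big_add1 /= !big_mkord /qpoch; congr (_ * _).
by apply: eq_bigr => t _; rewrite addn0 exprM.
Qed.

Lemma sum_dvd_cat L1 L2 i : sum_dvd (L1 ++ L2) i = (sum_dvd L1 i + sum_dvd L2 i)%N.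
Proof. by rewrite /sum_dvd big_cat. Qed.

Lemma sum_dvd_progression m r N i : (r < m)%N -> (0 < i < N)%N ->
  sum_dvd (progression m r N) i = (\sum_(d <- divisors i | d %% m == r) d)%N.
Proof.
move=> ltrm /andP[i_gt0 ltiN].
rewrite /sum_dvd -big_filter -[RHS]big_filter; apply/perm_big/uniq_perm.
- by rewrite filter_uniq // map_inj_uniq ?iota_uniq // => t1 t2 /=; nia.
- by rewrite filter_uniq ?divisors_uniq.
move=> d; rewrite !mem_filter -dvdn_divisors //.
case d_dvd: (d %| i)%N; rewrite ?andbF //= andbT.
have d_gt0 := dvdn_gt0 i_gt0 d_dvd; have led := dvdn_leq i_gt0 d_dvd.
apply/mapP/eqP => [[t _ ->] | dmod]; first by rewrite mulnC modnMDl modn_small.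
exists (d %/ m)%N; last by rewrite {1}(divn_eq d m) dmod mulnC.
rewrite mem_iota; have := leq_div d m; have := divn_eq d m; rewrite dmod.
by case: eqP => [r0 | _] /=; nia.
Qed.

Lemma sigmap_nat_split m i : (3 <= m)%N ->
  sigmap_nat m i = (\sum_(d <- divisors i | d %% m == 0) d +
                    \sum_(d <- divisors i | d %% m == 1) d +
                    \sum_(d <- divisors i | d %% m == m.-1) d)%N.
Proof.
move=> m_ge3; rewrite /sigmap_nat [LHS]big_mkcond !(big_mkcond (fun d => _ == _)) -!big_split /=.
apply: eq_bigr => d _; have := ltn_pmod d (ltnW (ltnW m_ge3)).
by case: eqP => ?; case: eqP => ?; case: eqP => ? //=; lia.
Qed.

Lemma sum_dvd_jacobi_exps m N i : (3 <= m)%N -> (0 < i < N)%N ->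
  sum_dvd (jacobi_exps m N) i = sigmap_nat m i.
Proof.
move=> m_ge3 i_range.
by rewrite !sum_dvd_cat !sum_dvd_progression ?sigmap_nat_split ?addnA //; lia.
Qed.

Lemma eg_sigmap_rec m n : (3 <= m)%N ->
  eg (m + 2) n *+ n = - \sum_(j < n) eg (m + 2) j * (sigmap_nat m (n - j))%:Z.
Proof.
move=> m_ge3; have m_ge2 := ltnW m_ge3; set N := n.*2.+1.
have coefF j : (j <= n)%N -> (prod_1subXn int (jacobi_exps m N))`_j = eg (m + 2) j.
  move=> lejn; rewrite prod_jacobi_exps // (@jacobi_triple_product_upto _ _ m_ge2 n) //.
  by rewrite coef_theta_poly -eg_theta //; lia.
rewrite -coefF // coef_prod_1subXn_rec ?jacobi_exps_no0 //; congr (- _); apply: eq_bigr => j _.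
have ltjn := ltn_ord j.
by rewrite -mulr_natr natz coefF ?sum_dvd_jacobi_exps //; lia.
Qed.

Lemma sigmap_le0 m (x : int) : x <= 0 -> sigmap m x = 0.
Proof. by move=> x_le0; rewrite /sigmap le_gtF. Qed.

Lemma sigmap_subn m n j : (j < n)%N -> sigmap m (n%:Z - j%:Z) = (sigmap_nat m (n - j))%:Z.
Proof.
move=> ltjn; rewrite /sigmap subzn; last exact: ltnW.
by rewrite ltz_nat subn_gt0 ltjn absz_nat.
Qed.

Theorem theorem2p9 (m n : nat) (hm : (3 <= m)%N) (hn : (1 <= n)%N) :
  sigmap m n%:Z =
    - (n%:Z * eg (m + 2) n)
    + \sum_(1 <= k < n)
        (-1) ^+ k.+1 *
          (sigmap m (n%:Z - (Pgk (m + 2) k)%:Z)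
           + sigmap m (n%:Z - (Qgk (m + 2) k)%:Z)).
Proof.
have := eg_sigmap_rec n hm.
rewrite (eq_bigr (fun j : 'I_n => eg (m + 2) j * sigmap m (n%:Z - j%:Z))); last first.
  by move=> j _; rewrite sigmap_subn.
rewrite (sum_eg (f := fun j => sigmap m (n%:Z - j%:Z)) hm) => [rec|j lenj]; last first.
  by rewrite sigmap_le0 // subr_le0 lez_nat.
rewrite subr0 in rec.
have -> : n%:Z * eg (m + 2) n = eg (m + 2) n *+ n by rewrite mulrC -mulr_natr natz.
rewrite rec opprK -addrA -big_split /= big1 ?addr0 // => k _.
by rewrite exprS; ring.
Qed.
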